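(* Let $\mathcal{X},\mathcal{Y}$ be stationary finite Markov chains and $C:{\bm X}\times{\bm Y}\to\mathbb{R}_+$ a cost function. Then $$d_{\mathrm{OTC}}(\mathcal{X},\mathcal{Y};C)=\lim_{\delta\to0}d^{\delta,(\infty)}_{\mathrm{WL}}(\mathcal{X},\mathcal{Y};C),\quad\text{and hence}\quad d_{\mathrm{OTC}}(\mathcal{X},\mathcal{Y};C)=\lim_{\delta\to0}\lim_{k\to\infty}d^{\delta,(k)}_{\mathrm{WL}}(\mathcal{X},\mathcal{Y};C).$$
   Context: A finite Markov chain $\mathcal{X}=({\bm X},m^{\bm X}_\bullet,\nu^{\bm X})$ consists of a finite set ${\bm X}$, a transition kernel $m^{\bm X}_\bullet:{\bm X}\to\mathcal{P}({\bm X})$ and an initial distribution $\nu^{\bm X}$; it is stationary if $\nu^{\bm X}$ is stationary for $m^{\bm X}_\bullet$. $\mathcal{C}(\alpha,\beta)$ denotes the set of couplings. A Markovian coupling between $\mathcal{X}$ and $\mathcal{Y}$ is a (possibly time-inhomogeneous) Markov chain $(X_t,Y_t)_{t\in\mathbb{N}}$ on ${\bm X}\times{\bm Y}$ with $\mathrm{law}(X_0,Y_0)\in\mathcal{C}(\nu^{\bm X},\nu^{\bm Y})$ and, for all $t,x,y$, the conditional law of $(X_{t+1},Y_{t+1})$ given $(X_t,Y_t)=(x,y)$ in $\mathcal{C}(m^{\bm X}_x,m^{\bm Y}_y)$; it is time homogeneous if these laws do not depend on $t$. $\Pi(\mathcal{X},\mathcal{Y})$ is the set of Markovian couplings. $d_{\mathrm{OTC}}(\mathcal{X},\mathcal{Y};C)=\inf\mathbb{E}\,C(X_0,Y_0)$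 over time homogeneous Markovian couplings whose initial distribution is stationary for the coupled chain. For $\delta\in(0,1]$: $d^{\delta,(k)}_{\mathrm{WL}}(\mathcal{X},\mathcal{Y};C)=\inf_{\Pi(\mathcal{X},\mathcal{Y})}\mathbb{E}\big[\sum_{t=0}^{k-1}\delta(1-\delta)^tC(X_t,Y_t)+(1-\delta)^kC(X_k,Y_k)\big]$ for $k\in\mathbb{N}$ and $d^{\delta,(\infty)}_{\mathrm{WL}}(\mathcal{X},\mathcal{Y};C)=\inf_{\Pi(\mathcal{X},\mathcal{Y})}\mathbb{E}\big[\sum_{t=0}^{\infty}\delta(1-\delta)^tC(X_t,Y_t)\big]$. *)

From HB Require Import structures.
From mathcomp Require Import all_boot all_order all_algebra.
From mathcomp Require Import all_classical all_reals all_analysis.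
Set Implicit Arguments. Unset Strict Implicit. Unset Printing Implicit Defensive.
Import Order.TTheory GRing.Theory Num.Theory.
Local Open Scope classical_set_scope.
Local Open Scope ring_scope.

Definition is_prob {R : realType} {T : finType} (p : T -> R) : Prop :=
  (forall x, 0 <= p x) /\ \sum_(x : T) p x = 1.

Definition is_kernel {R : realType} {T : finType} (m : T -> T -> R) : Prop :=
  forall x, is_prob (m x).

Definition is_stationary {R : realType} {T : finType} (m : T -> T -> R) (nu : T -> R) : Prop :=
  forall x', \sum_(x : T) nu x * m x x' = nu x'.

Definition stationary_chain {R : realType} {T : finType} (m : T -> T -> R) (nu : T -> R) : Prop :=
  is_kernel m /\ is_prob nu /\ is_stationary m nu.

Definition is_coupling {R : realType} {X Y : finType} (a : X -> R) (b : Y -> R)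
  (g : (X * Y)%type -> R) : Prop :=
  (forall z, 0 <= g z) /\
  (forall x, \sum_(y : Y) g (x, y) = a x) /\
  (forall y, \sum_(x : X) g (x, y) = b y).

(* A (possibly time-inhomogeneous) Markovian coupling, given by its initial law g0
   and its transition kernels K t (law of (X_{t+1},Y_{t+1}) given (X_t,Y_t)=z is K t z). *)
Definition markov_coupling {R : realType} {X Y : finType}
  (mX : X -> X -> R) (nuX : X -> R) (mY : Y -> Y -> R) (nuY : Y -> R)
  (g0 : (X * Y)%type -> R) (K : nat -> (X * Y)%type -> (X * Y)%type -> R) : Prop :=
  is_coupling nuX nuY g0 /\
  (forall t x y, is_coupling (mX x) (mY y) (K t (x, y))).

Fixpoint coupling_law {R : realType} {X Y : finType}
  (g0 : (X * Y)%type -> R) (K : nat -> (X * Y)%type -> (X * Y)%type -> R) (t : nat)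
  : (X * Y)%type -> R :=
  match t with
  | 0%N => g0
  | t'.+1 => fun z' => \sum_(z : (X * Y)%type) coupling_law g0 K t' z * K t' z z'
  end.

Definition exp_cost {R : realType} {X Y : finType}
  (g0 : (X * Y)%type -> R) (K : nat -> (X * Y)%type -> (X * Y)%type -> R)
  (C : X -> Y -> R) (t : nat) : R :=
  \sum_(z : (X * Y)%type) coupling_law g0 K t z * C z.1 z.2.

Definition dWL_k {R : realType} {X Y : finType}
  (mX : X -> X -> R) (nuX : X -> R) (mY : Y -> Y -> R) (nuY : Y -> R)
  (C : X -> Y -> R) (delta : R) (k : nat) : R :=
  inf [set v : R | exists g0 K, markov_coupling mX nuX mY nuY g0 K /\
     v = \sum_(t < k) delta * (1 - delta) ^+ t * exp_cost g0 K C t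
         + (1 - delta) ^+ k * exp_cost g0 K C k].

(* d_WL^{delta,(infty)}: the expectation of the (nonnegative) series equals the
   series of expectations. *)
Definition dWL_inf {R : realType} {X Y : finType}
  (mX : X -> X -> R) (nuX : X -> R) (mY : Y -> Y -> R) (nuY : Y -> R)
  (C : X -> Y -> R) (delta : R) : R :=
  inf [set v : R | exists g0 K, markov_coupling mX nuX mY nuY g0 K /\
     v = lim ((fun n : nat => \sum_(t < n) delta * (1 - delta) ^+ t * exp_cost g0 K C t)
              @ \oo)].

Definition dOTC {R : realType} {X Y : finType}
  (mX : X -> X -> R) (nuX : X -> R) (mY : Y -> Y -> R) (nuY : Y -> R)
  (C : X -> Y -> R) : R :=
  inf [set v : R | exists (g : (X * Y)%type -> R) (K : (X * Y)%type -> (X * Y)%type -> R),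
     is_coupling nuX nuY g /\
     (forall x y, is_coupling (mX x) (mY y) (K (x, y))) /\
     is_stationary K g /\
     v = \sum_(z : (X * Y)%type) g z * C z.1 z.2].

(* For a stationary time-homogeneous coupling the law of (X_t, Y_t) never changes, so all its
   discounted costs equal its OTC cost: d_WL^delta <= d_OTC.  Conversely, a coupling that is
   nearly optimal for d_WL^delta yields, through the discounted occupation measure of the
   consecutive pairs (Z_t, Z_(t+1)) up to a large horizon, a "flow" on pairs of states whose
   transition constraints hold exactly and whose marginal and stationarity constraints hold up
   to O(delta).  As delta -> 0, a cluster point of such flows in the compact unit cube is an
   exactly stationary coupling of no larger cost, so d_OTC <= liminf d_WL^delta.  Finally
   d_WL^(delta,(k)) differs from d_WL^(delta,(oo)) by at most (1 - delta)^k * sum C, which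
   gives the iterated limit. *)

From HB Require Import structures.
From mathcomp Require Import all_boot all_order all_algebra.
From mathcomp Require Import all_classical all_reals all_analysis.
From mathcomp Require Import ring lra.
Import Order.TTheory GRing.Theory Num.Theory.
Import numFieldNormedType.Exports.
Local Open Scope classical_set_scope.
Local Open Scope ring_scope.
Set Implicit Arguments. Unset Strict Implicit. Unset Printing Implicit Defensive.

Section RealContinuity.
Context {R : realType} {T : topologicalType}.
Implicit Types f g : T -> R.

Lemma continuous_subr f g :
  continuous f -> continuous g -> continuous (fun x => f x - g x).
Proof. by move=> cf cg x; apply: cvgB; [exact: cf | exact: cg]. Qed.

Lemma continuous_mulr f g :
  continuous f -> continuous g -> continuous (fun x => f x * g x).
Proof. by move=> cf cg x; apply: cvgM; [exact: cf | exact: cg]. Qed.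

Lemma continuous_sumr (I : Type) (r : seq I) (F : I -> T -> R) :
  (forall i, continuous (F i)) -> continuous (fun x => \sum_(i <- r) F i x).
Proof. by move=> cF; apply: continuous_big => [|i _]; [exact: add_continuous | exact: cF]. Qed.

End RealContinuity.

Section ClusterPoints.
Context {R : realType} {T : topologicalType}.
Implicit Types (u : nat -> T) (f : T -> R).

Lemma compact_cluster_seq (A : set T) u :
  compact A -> (forall n, A (u n)) -> exists2 p, A p & cluster (u @ \oo) p.
Proof.
move=> cA uA; have [|p [Ap clp]] := cA (u @ \oo) _.
- by exists 0%N => // n _; exact: uA.
- by exists p.
Qed.

Lemma cluster_le u p f c : cluster (u @ \oo) p -> continuous f ->
  (\forall n \near \oo, f (u n) <= c) -> f p <= c.
Proof.
move=> clp cf ucf; have cl : closed [set x | f x <= c].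
  by have := (continuous_closedP f).1 cf _ (@closed_le R c).
by apply: cl; rewrite clusterE in clp; exact: clp.
Qed.

Lemma cluster_eq0 u p f : cluster (u @ \oo) p -> continuous f ->
  (forall n, `|f (u n)| <= n.+1%:R^-1) -> f p = 0.
Proof.
move=> clp cf uf; apply/normr0_eq0/le_anti; rewrite normr_ge0 andbT.
apply/ler_addgt0Pr => e e0; rewrite add0r.
apply: (cluster_le (f := fun x => `|f x|)) clp _ _.
  by move=> x; apply: continuous_comp; [exact: cf | exact: norm_continuous].
near=> n; apply: le_trans (uf n) (ltW _).
by near: n; exact: (near_infty_natSinv_lt (PosNum e0)).
Unshelve. all: by end_near.
Qed.

Lemma compact_common_zero_of_approx (I : Type) (A : set T) (g : I -> T -> R) f c :
  compact A -> (forall i, continuous (g i)) -> continuous f ->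
  (forall n, exists x, [/\ A x, forall i, `|g i x| <= n.+1%:R^-1 & f x <= c]) ->
  exists x, [/\ A x, forall i, g i x = 0 & f x <= c].
Proof.
move=> cA cg cf /choice[u hu].
have [p Ap clp] := compact_cluster_seq cA (fun n => let: And3 un _ _ := hu n in un).
exists p; split => //.
- by move=> i; apply: cluster_eq0 clp (cg i) _ => n; case: (hu n).
- by apply: cluster_le clp cf _; apply: nearW => n; case: (hu n).
Qed.

End ClusterPoints.

Section UnitCube.
Context {R : realType} (W : eqType).
Local Notation PT := (prod_topology (fun _ : W => R)).

Lemma unit_cube_compact : compact [set r : PT | forall w, 0 <= r w <= 1].
Proof.
have := @tychonoff W (fun _ => R) (fun _ => `[0, 1]%classic) (fun _ => @segment_compact R 0 1).
congr compact; apply/funext => r /=; apply/propext; split => h w; have := h w;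
  by rewrite /= in_itv.
Qed.

End UnitCube.

Section Couplings.
Context {R : realType}.

Lemma sum_pair (I J : finType) (F : I * J -> R) :
  \sum_(p : I * J) F p = \sum_(i : I) \sum_(j : J) F (i, j).
Proof. by rewrite pair_bigA; apply: eq_bigr => -[]. Qed.

Lemma prob_le1 (T : finType) (p : T -> R) x : is_prob p -> p x <= 1.
Proof. by move=> [p0 <-]; rewrite (bigD1 x) //= lerDl sumr_ge0. Qed.

Lemma coupling_mass1 (X Y : finType) (a : X -> R) (b : Y -> R) g :
  is_coupling a b g -> is_prob a -> \sum_p g p = 1.
Proof.
by move=> [_ [ga _]] [_ <-]; rewrite sum_pair; apply: eq_bigr => x _; exact: ga.
Qed.

Lemma coupling_prob (X Y : finType) (a : X -> R) (b : Y -> R) g :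
  is_coupling a b g -> is_prob a -> is_prob g.
Proof. by move=> gc pa; split; [exact: gc.1 | exact: coupling_mass1 gc pa]. Qed.

Lemma prod_coupling (X Y : finType) (a : X -> R) (b : Y -> R) :
  is_prob a -> is_prob b -> is_coupling a b (fun p => a p.1 * b p.2).
Proof.
move=> [a0 a1] [b0 b1]; split; first by move=> p; exact: mulr_ge0.
by split => [x|y] /=; [rewrite -mulr_sumr b1 mulr1 | rewrite -mulr_suml a1 mul1r].
Qed.

Lemma coupling_law_stationary (X Y : finType) (K : X * Y -> X * Y -> R) g t :
  is_stationary K g -> coupling_law g (fun=> K) t = g.
Proof. by move=> Kg; elim: t => //= t ->; apply/funext => z'; exact: Kg. Qed.

Lemma coupling_law_coupling (X Y : finType) (mX : X -> X -> R) nuX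
    (mY : Y -> Y -> R) nuY g0 K t :
  is_stationary mX nuX -> is_stationary mY nuY ->
  markov_coupling mX nuX mY nuY g0 K -> is_coupling nuX nuY (coupling_law g0 K t).
Proof.
move=> sX sY [g0c Kc]; elim: t => [//|t [IH0 [IHx IHy]]] /=.
split; [move=> z'; apply: sumr_ge0 => -[x y] _; apply: mulr_ge0 => //; exact: (Kc t x y).1|].
split => [x'|y']; rewrite exchange_big sum_pair /=.
- under eq_bigr do under eq_bigr do rewrite -mulr_sumr ((Kc t _ _).2.1 x').
  by rewrite -[RHS]sX; apply: eq_bigr => x _; rewrite -mulr_suml IHx.
- rewrite exchange_big /=.
  under eq_bigr do under eq_bigr do rewrite -mulr_sumr ((Kc t _ _).2.2 y').
  by rewrite -[RHS]sY; apply: eq_bigr => y _; rewrite -mulr_suml IHy.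
Qed.

Lemma discount_weight_ge0 (d : R) t : 0 < d -> d <= 1 -> 0 <= d * (1 - d) ^+ t.
Proof.
by move=> d_gt0 d_le1; apply: mulr_ge0; [exact: ltW | apply: exprn_ge0; rewrite subr_ge0].
Qed.

Lemma sum_discount_weights (d : R) n :
  \sum_(t < n) d * (1 - d) ^+ t = 1 - (1 - d) ^+ n.
Proof.
elim: n => [|n IH]; first by rewrite big_ord0 expr0 subrr.
by rewrite big_ord_recr /= IH exprSr; ring.
Qed.

Lemma discounted_shift_dist (d : R) (a : nat -> R) N :
  0 < d -> d <= 1 -> (forall t, 0 <= a t <= 1) ->
  `|\sum_(t < N) d * (1 - d) ^+ t * a t.+1 - \sum_(t < N) d * (1 - d) ^+ t * a t|
    <= 2 * d.
Proof.
move=> d0 d1 a01.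
have shift : (1 - d) * \sum_(t < N) d * (1 - d) ^+ t * a t.+1 =
    \sum_(t < N) d * (1 - d) ^+ t * a t - d * a 0%N + d * (1 - d) ^+ N * a N.
  elim: N => [|N IH]; first by rewrite !big_ord0 expr0; ring.
  by rewrite !big_ord_recr /= mulrDr IH exprSr; ring.
set A := \sum_(t < N) _ * a t.+1 in shift *; set B := \sum_(t < N) _ * a t in shift *.
have w0 t := discount_weight_ge0 t d0 d1.
have w1 : (1 - d) ^+ N <= 1 by rewrite exprn_ile1 ?subr_ge0 //; lra.
have /andP[A0 A1] : 0 <= A <= 1.
  apply/andP; split.
    by apply: sumr_ge0 => t _; apply: mulr_ge0 => //; case/andP: (a01 t.+1).
  apply: le_trans (_ : \sum_(t < N) d * (1 - d) ^+ t <= 1).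
    by apply: ler_sum => t _; rewrite ler_piMr //; case/andP: (a01 t.+1).
  by rewrite sum_discount_weights lerBlDr lerDl exprn_ge0 // subr_ge0.
have /andP[a00 a01'] := a01 0%N; have /andP[aN0 aN1] := a01 N.
have p1 : 0 <= d * (1 - d) ^+ N * a N by exact: mulr_ge0.
have p1' : d * (1 - d) ^+ N * a N <= d.
  apply: le_trans (ler_piMr (w0 N) aN1) _.
  by apply: ler_piMr; [exact: ltW | exact: w1].
rewrite ler_norml; apply/andP; split; nra.
Qed.

End Couplings.

Section InfDistance.
Context {R : realType} {A B : Type}.

Lemma inf_le_inf_add (P : A -> B -> Prop) (f h : A -> B -> R) e :
  (exists a b, P a b) -> (forall a b, P a b -> 0 <= f a b) ->
  (forall a b, P a b -> f a b <= h a b + e) ->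
  inf [set v | exists a b, P a b /\ v = f a b] <=
    inf [set v | exists a b, P a b /\ v = h a b] + e.
Proof.
move=> [a0 [b0 P0]] f0 fh; rewrite -lerBlDr.
apply: lb_le_inf => [|_ [a [b [Pab ->]]]]; first by exists (h a0 b0), a0, b0.
rewrite lerBlDr; apply: le_trans (fh a b Pab); apply: ge_inf; last by exists a, b.
by exists 0 => _ [a' [b' [P' ->]]]; exact: f0.
Qed.

Lemma inf_dist_le (P : A -> B -> Prop) (f h : A -> B -> R) e :
  (exists a b, P a b) ->
  (forall a b, P a b -> 0 <= f a b) -> (forall a b, P a b -> 0 <= h a b) ->
  (forall a b, P a b -> `|f a b - h a b| <= e) ->
  `|inf [set v | exists a b, P a b /\ v = f a b] -
    inf [set v | exists a b, P a b /\ v = h a b]| <= e.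
Proof.
move=> P0 f0 h0 fh.
have le_fh a b : P a b -> f a b <= h a b + e.
  by move=> Pab; move: (fh a b Pab); rewrite ler_norml => /andP[]; lra.
have le_hf a b : P a b -> h a b <= f a b + e.
  by move=> Pab; move: (fh a b Pab); rewrite ler_norml => /andP[]; lra.
have := inf_le_inf_add P0 f0 le_fh; have := inf_le_inf_add P0 h0 le_hf.
by rewrite ler_norml; lra.
Qed.

End InfDistance.

Section StationaryChains.
Variable R : realType.
Variables X Y : finType.
Variables (mX : X -> X -> R) (nuX : X -> R) (mY : Y -> Y -> R) (nuY : Y -> R).
Variable C : X -> Y -> R.
Hypothesis HX : stationary_chain mX nuX.
Hypothesis HY : stationary_chain mY nuY.
Hypothesis C_ge0 : forall x y, 0 <= C x y.

Local Notation Z := (X * Y)%type.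
Local Notation markov_coupling := (markov_coupling mX nuX mY nuY).

Definition cost_bound := \sum_(z : Z) C z.1 z.2.

Definition discounted_cost g0 K (d : R) n :=
  \sum_(t < n) d * (1 - d) ^+ t * exp_cost g0 K C t.

Section FixedCoupling.
Variables (g0 : Z -> R) (K : nat -> Z -> Z -> R).
Hypothesis g0K : markov_coupling g0 K.

Lemma coupling_law_prob t : is_prob (coupling_law g0 K t).
Proof.
exact: coupling_prob (coupling_law_coupling t HX.2.2 HY.2.2 g0K) HX.2.1.
Qed.

Lemma exp_cost_ge0 t : 0 <= exp_cost g0 K C t.
Proof.
by apply: sumr_ge0 => z _; apply: mulr_ge0 => //; exact: (coupling_law_prob t).1.
Qed.

Lemma exp_cost_le t : exp_cost g0 K C t <= cost_bound.
Proof. by apply: ler_sum => z _; apply: ler_piMl => //; exact: prob_le1 (coupling_law_prob t). Qed.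

Variable d : R.
Hypotheses (d_gt0 : 0 < d) (d_le1 : d <= 1).

Let w_ge0 t := discount_weight_ge0 t d_gt0 d_le1.

Lemma discounted_costS n : discounted_cost g0 K d n.+1 =
  discounted_cost g0 K d n + d * (1 - d) ^+ n * exp_cost g0 K C n.
Proof. by rewrite /discounted_cost big_ord_recr. Qed.

Lemma discounted_cost_nd : nondecreasing_seq (discounted_cost g0 K d).
Proof.
by apply/nondecreasing_seqP => n; rewrite discounted_costS lerDl mulr_ge0 ?exp_cost_ge0.
Qed.

Lemma discounted_cost_envelope_ni :
  nonincreasing_seq (fun n => discounted_cost g0 K d n + cost_bound * (1 - d) ^+ n).
Proof.
apply/nonincreasing_seqP => n; rewrite discounted_costS exprSr.
have := ler_wpM2l (w_ge0 n) (exp_cost_le n).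
have -> : cost_bound * ((1 - d) ^+ n * (1 - d)) =
  cost_bound * (1 - d) ^+ n - d * (1 - d) ^+ n * cost_bound by ring.
lra.
Qed.

Lemma discounted_cost_le_envelope n k :
  discounted_cost g0 K d n <= discounted_cost g0 K d k + cost_bound * (1 - d) ^+ k.
Proof.
have Cb0 : 0 <= cost_bound by apply: sumr_ge0.
apply: le_trans (discounted_cost_nd (leq_maxl n k)) _.
apply: le_trans (discounted_cost_envelope_ni (leq_maxr n k)).
by rewrite lerDl mulr_ge0 // exprn_ge0 // subr_ge0.
Qed.

Lemma discounted_cost_cvg : cvgn (discounted_cost g0 K d).
Proof.
apply: cvgP (nondecreasing_cvgn discounted_cost_nd _).
by exists (discounted_cost g0 K d 0 + cost_bound * (1 - d) ^+ 0) => _ [n _ <-];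
  exact: discounted_cost_le_envelope.
Qed.

Lemma discounted_cost_le_lim n :
  discounted_cost g0 K d n <= limn (discounted_cost g0 K d).
Proof. exact: nondecreasing_cvgn_le discounted_cost_nd discounted_cost_cvg n. Qed.

Lemma discounted_cost_ge0 n : 0 <= discounted_cost g0 K d n.
Proof. by apply: sumr_ge0 => t _; exact: mulr_ge0 (w_ge0 t) (exp_cost_ge0 t). Qed.

Lemma lim_discounted_cost_ge0 : 0 <= limn (discounted_cost g0 K d).
Proof. exact: le_trans (discounted_cost_ge0 0) (discounted_cost_le_lim 0). Qed.

Lemma lim_discounted_cost_le k : limn (discounted_cost g0 K d) <=
  discounted_cost g0 K d k + cost_bound * (1 - d) ^+ k.
Proof.
by apply: limr_le discounted_cost_cvg _; apply: nearW => n;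
  exact: discounted_cost_le_envelope.
Qed.

Lemma truncated_cost_dist_lim k :
  `|discounted_cost g0 K d k + (1 - d) ^+ k * exp_cost g0 K C k -
    limn (discounted_cost g0 K d)| <= (1 - d) ^+ k * cost_bound.
Proof.
have := discounted_cost_le_lim k; have := lim_discounted_cost_le k.
have q0 : 0 <= (1 - d) ^+ k by rewrite exprn_ge0 // subr_ge0.
have := mulr_ge0 q0 (exp_cost_ge0 k); have := ler_wpM2l q0 (exp_cost_le k).
by rewrite ler_norml mulrC; lra.
Qed.

End FixedCoupling.

Definition indep_law (z : Z) := nuX z.1 * nuY z.2.
Definition indep_kernel (z z' : Z) := mX z.1 z'.1 * mY z.2 z'.2.

Lemma indep_law_coupling : is_coupling nuX nuY indep_law.
Proof. exact: prod_coupling HX.2.1 HY.2.1. Qed.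

Lemma indep_kernel_coupling x y : is_coupling (mX x) (mY y) (indep_kernel (x, y)).
Proof. exact: prod_coupling (HX.1 x) (HY.1 y). Qed.

Lemma indep_kernel_stationary : is_stationary indep_kernel indep_law.
Proof.
move=> [x' y']; rewrite sum_pair /indep_law /indep_kernel /= -HX.2.2 -HY.2.2 big_distrl /=.
by apply: eq_bigr => x _; rewrite big_distrr /=; apply: eq_bigr => y _; ring.
Qed.

Lemma indep_markov_coupling : markov_coupling indep_law (fun=> indep_kernel).
Proof. by split=> [|_]; [exact: indep_law_coupling | exact: indep_kernel_coupling]. Qed.

Section FixedDiscount.
Variable d : R.
Hypotheses (d_gt0 : 0 < d) (d_le1 : d <= 1).

Lemma norm_1subr_lt1 : `|1 - d| < 1.
Proof. by rewrite ger0_norm ?subr_ge0 // ltrBlDr ltrDl. Qed.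

Lemma dWL_k_dist_dWL_inf k :
  `|dWL_k mX nuX mY nuY C d k - dWL_inf mX nuX mY nuY C d| <= (1 - d) ^+ k * cost_bound.
Proof.
apply: inf_dist_le => [|g0 K g0K|g0 K g0K|g0 K g0K].
- by exists indep_law, (fun=> indep_kernel); exact: indep_markov_coupling.
- apply: addr_ge0; first exact: discounted_cost_ge0.
  by apply: mulr_ge0; [rewrite exprn_ge0 // subr_ge0 | exact: exp_cost_ge0].
- exact: lim_discounted_cost_ge0.
- exact: truncated_cost_dist_lim.
Qed.

Lemma dWL_k_cvg : dWL_k mX nuX mY nuY C d k @[k --> \oo] --> dWL_inf mX nuX mY nuY C d.
Proof.
have tail0 : (1 - d) ^+ k * cost_bound @[k --> \oo] --> (0 : R).
  by rewrite -(mul0r cost_bound); exact: cvgM (cvg_expr norm_1subr_lt1) (cvg_cst _).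
apply/cvgrPdist_le => e e0; have tail_le := (cvgrPdist_le _ _).1 tail0 e e0; near=> k.
have : `|0 - (1 - d) ^+ k * cost_bound| <= e by near: k; exact: tail_le.
rewrite sub0r normrN distrC; apply: le_trans; apply: le_trans (dWL_k_dist_dWL_inf k) _.
exact: ler_norm.
Unshelve. all: by end_near.
Qed.

Lemma discounted_cost_stationary g K : is_stationary K g ->
  discounted_cost g (fun=> K) d =
    (fun n => (1 - (1 - d) ^+ n) * \sum_(z : Z) g z * C z.1 z.2).
Proof.
move=> Kg; apply/funext => n; rewrite -sum_discount_weights mulr_suml; apply: eq_bigr => t _.
by rewrite /exp_cost coupling_law_stationary.
Qed.

Lemma dWL_inf_le_dOTC : dWL_inf mX nuX mY nuY C d <= dOTC mX nuX mY nuY C.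
Proof.
apply: lb_le_inf.
  exists (\sum_(z : Z) indep_law z * C z.1 z.2), indep_law, indep_kernel.
  by split; [exact: indep_law_coupling | split; [exact: indep_kernel_coupling | split;
    [exact: indep_kernel_stationary |]]].
move=> _ [g [K [gc [Kc [Kg ->]]]]].
have g0K : markov_coupling g (fun=> K) by split=> // _.
have lim_cost : limn (discounted_cost g (fun=> K) d) = \sum_(z : Z) g z * C z.1 z.2.
  rewrite discounted_cost_stationary //; apply: cvg_lim => //.
  rewrite -[X in _ --> X]mul1r; apply: cvgMl; rewrite -[X in _ --> X]subr0.
  exact: cvgB (cvg_cst _) (cvg_expr norm_1subr_lt1).
rewrite -lim_cost; apply: ge_inf; last by exists g, (fun=> K).
by exists 0 => _ [g0 [K0 [g0K0 ->]]]; exact: lim_discounted_cost_ge0.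
Qed.

End FixedDiscount.

Definition flow_mass (rho : Z * Z -> R) (z : Z) := \sum_(z' : Z) rho (z, z').

Definition flow_cost (rho : Z * Z -> R) := \sum_(z : Z) flow_mass rho z * C z.1 z.2.

(* A flow [rho] stands for the joint law of two consecutive states [(Z_t, Z_(t+1))]; all
   residuals vanish exactly when [flow_mass rho] is a stationary coupling of [nuX] and [nuY]
   for a kernel whose conditional laws couple [mX] and [mY]. *)
Inductive flow_constraint :=
  | LeftTransition of X & Y & X
  | RightTransition of X & Y & Y
  | LeftMarginal of X
  | RightMarginal of Y
  | Balance of Z.

Definition flow_residual (rho : Z * Z -> R) (k : flow_constraint) : R :=
  match k with
  | LeftTransition x y x' =>
      \sum_(y' : Y) rho ((x, y), (x', y')) - mX x x' * flow_mass rho (x, y)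
  | RightTransition x y y' =>
      \sum_(x' : X) rho ((x, y), (x', y')) - mY y y' * flow_mass rho (x, y)
  | LeftMarginal x => \sum_(y : Y) flow_mass rho (x, y) - nuX x
  | RightMarginal y => \sum_(x : X) flow_mass rho (x, y) - nuY y
  | Balance z' => \sum_(z : Z) rho (z, z') - flow_mass rho z'
  end.

Local Notation flow_space := (prod_topology (fun _ : Z * Z => R)).

Ltac coordinate_continuity :=
  repeat first [ exact: proj_continuous | exact: cst_continuous
               | apply: continuous_sumr => ? | apply: continuous_subr
               | apply: continuous_mulr ].

Lemma flow_residual_continuous k :
  continuous (fun rho : flow_space => flow_residual rho k).
Proof. by case: k => * /=; rewrite /flow_mass; coordinate_continuity. Qed.

Lemma flow_cost_continuous : continuous (fun rho : flow_space => flow_cost rho).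
Proof. by rewrite /flow_cost /flow_mass; coordinate_continuity. Qed.

Lemma dOTC_le_flow_cost rho : (forall w, 0 <= rho w) ->
  (forall k, flow_residual rho k = 0) -> dOTC mX nuX mY nuY C <= flow_cost rho.
Proof.
move=> rho0 res0; set g := flow_mass rho.
have g0 z : 0 <= g z by exact: sumr_ge0.
pose K z z' := if g z == 0 then indep_kernel z z' else rho (z, z') / g z.
have gK z z' : g z * K z z' = rho (z, z').
  rewrite /K; case: eqP => [gz0|/eqP gz0]; last by rewrite mulrC divfK.
  by rewrite gz0 mul0r; apply/esym/(psumr_eq0P (fun i _ => rho0 (z, i)) gz0).
have Kc x y : is_coupling (mX x) (mY y) (K (x, y)).
  rewrite /K; case: eqP => [_|/eqP gz0]; first exact: indep_kernel_coupling.
  split; first by move=> z'; exact: divr_ge0.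
  split => [x'|y']; rewrite -mulr_suml.
  - by rewrite (subr0_eq (res0 (LeftTransition x y x'))) mulfK.
  - by rewrite (subr0_eq (res0 (RightTransition x y y'))) mulfK.
have gc : is_coupling nuX nuY g.
  split=> //; split=> [x|y]; first exact: subr0_eq (res0 (LeftMarginal x)).
  exact: subr0_eq (res0 (RightMarginal y)).
have Kg : is_stationary K g.
  by move=> z'; under eq_bigr do rewrite gK; exact: subr0_eq (res0 (Balance z')).
apply: ge_inf; last by exists g, K.
by exists 0 => _ [g' [K' [[g'0 _] [_ [_ ->]]]]]; apply: sumr_ge0 => z _; exact: mulr_ge0.
Qed.

Definition occupation_flow g0 (K : nat -> Z -> Z -> R) (d : R) N (w : Z * Z) :=
  \sum_(t < N) d * (1 - d) ^+ t * coupling_law g0 K t w.1 * K t w.1 w.2.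

Section OccupationFlow.
Variables (g0 : Z -> R) (K : nat -> Z -> Z -> R) (d : R) (N : nat).
Hypotheses (g0K : markov_coupling g0 K) (d_gt0 : 0 < d) (d_le1 : d <= 1).
Local Notation rho := (occupation_flow g0 K d N).

Let w_ge0 t := discount_weight_ge0 t d_gt0 d_le1.

Let law_coupling t := coupling_law_coupling t HX.2.2 HY.2.2 g0K.
Let law_prob t := coupling_law_prob g0K t.

Let kernel_prob t z : is_prob (K t z).
Proof. by case: z => x y; exact: coupling_prob (g0K.2 t x y) (HX.1 x). Qed.

Lemma occupation_flow_mass z :
  flow_mass rho z = \sum_(t < N) d * (1 - d) ^+ t * coupling_law g0 K t z.
Proof.
rewrite /flow_mass /occupation_flow exchange_big /=; apply: eq_bigr => t _.
by rewrite -mulr_sumr (kernel_prob t z).2 mulr1.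
Qed.

Lemma occupation_flow_cube w : 0 <= rho w <= 1.
Proof.
apply/andP; split.
  apply: sumr_ge0 => t _; apply: mulr_ge0; last exact: (kernel_prob t w.1).1.
  by apply: mulr_ge0 => //; exact: (law_prob t).1.
apply: le_trans (_ : \sum_(t < N) d * (1 - d) ^+ t <= 1).
  apply: ler_sum => t _; rewrite -mulrA; apply: ler_piMr => //.
  by apply: mulr_ile1; [exact: (law_prob t).1 | exact: (kernel_prob t w.1).1
    | exact: prob_le1 (law_prob t) | exact: prob_le1 (kernel_prob t w.1)].
by rewrite sum_discount_weights lerBlDr lerDl exprn_ge0 // subr_ge0.
Qed.

Lemma occupation_flow_cost : flow_cost rho = discounted_cost g0 K d N.
Proof.
rewrite /flow_cost; under eq_bigr do rewrite occupation_flow_mass mulr_suml.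
rewrite exchange_big; apply: eq_bigr => t _ /=.
by rewrite /exp_cost mulr_sumr; apply: eq_bigr => z _; rewrite mulrA.
Qed.

Lemma occupation_flow_residual k : `|flow_residual rho k| <= (1 - d) ^+ N + 2 * d.
Proof.
have q0 : 0 <= (1 - d) ^+ N by rewrite exprn_ge0 // subr_ge0.
have bound_ge0 : 0 <= (1 - d) ^+ N + 2 * d by rewrite addr_ge0 // mulr_ge0 // ltW.
have marginal_dist a : 0 <= a <= 1 ->
    `|\sum_(t < N) d * (1 - d) ^+ t * a - a| <= (1 - d) ^+ N + 2 * d.
  move=> /andP[a0 a1]; rewrite -mulr_suml sum_discount_weights mulrBl mul1r.
  rewrite addrAC subrr add0r normrN ger0_norm ?mulr_ge0 //.
  by apply: le_trans (ler_piMr q0 a1) _; rewrite lerDl mulr_ge0 // ltW.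
case: k => [x y x'|x y y'|x|y|z'] /=.
- suff -> : \sum_(y' : Y) rho ((x, y), (x', y')) = mX x x' * flow_mass rho (x, y).
    by rewrite subrr normr0.
  rewrite occupation_flow_mass mulr_sumr /occupation_flow exchange_big /=.
  apply: eq_bigr => t _; rewrite -mulr_sumr ((g0K.2 t x y).2.1 x'); ring.
- suff -> : \sum_(x' : X) rho ((x, y), (x', y')) = mY y y' * flow_mass rho (x, y).
    by rewrite subrr normr0.
  rewrite occupation_flow_mass mulr_sumr /occupation_flow exchange_big /=.
  apply: eq_bigr => t _; rewrite -mulr_sumr ((g0K.2 t x y).2.2 y'); ring.
- suff -> : \sum_(y : Y) flow_mass rho (x, y) = \sum_(t < N) d * (1 - d) ^+ t * nuX x.
    by apply: marginal_dist; rewrite (HX.2.1).1 prob_le1 //; exact: HX.2.1.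
  under eq_bigr do rewrite occupation_flow_mass.
  rewrite exchange_big; apply: eq_bigr => t _ /=.
  by rewrite -mulr_sumr ((law_coupling t).2.1 x).
- suff -> : \sum_(x : X) flow_mass rho (x, y) = \sum_(t < N) d * (1 - d) ^+ t * nuY y.
    by apply: marginal_dist; rewrite (HY.2.1).1 prob_le1 //; exact: HY.2.1.
  under eq_bigr do rewrite occupation_flow_mass.
  rewrite exchange_big; apply: eq_bigr => t _ /=.
  by rewrite -mulr_sumr ((law_coupling t).2.2 y).
- have -> : \sum_(z : Z) rho (z, z') =
      \sum_(t < N) d * (1 - d) ^+ t * coupling_law g0 K t.+1 z'.
    rewrite /occupation_flow exchange_big; apply: eq_bigr => t _ /=.
    by rewrite mulr_sumr; apply: eq_bigr => z _; rewrite mulrA.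
  have law01 t : 0 <= coupling_law g0 K t z' <= 1.
    by rewrite (law_prob t).1 prob_le1 //; exact: law_prob.
  rewrite occupation_flow_mass.
  by apply: le_trans (discounted_shift_dist N d_gt0 d_le1 law01) _; rewrite lerDr.
Qed.

End OccupationFlow.

Lemma exists_near_optimal_flow e c d : 0 < d -> d <= 1 -> 4 * d <= e ->
  dWL_inf mX nuX mY nuY C d < c ->
  exists rho : Z * Z -> R, [/\ forall w, 0 <= rho w <= 1,
    forall k, `|flow_residual rho k| <= e & flow_cost rho <= c].
Proof.
move=> d_gt0 d_le1 de lt_c.
have [|_ [g0 [K [g0K ->]]] lim_lt_c] := inf_lt _ lt_c.
  by eexists; exists indep_law, (fun=> indep_kernel); split; first exact: indep_markov_coupling.
have e2_gt0 : 0 < e / 2 by rewrite divr_gt0 //; lra.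
have [N _ tailN] := (cvgrPdist_le _ _).1 (cvg_expr (norm_1subr_lt1 d_gt0 d_le1)) _ e2_gt0.
have {tailN} tailN : (1 - d) ^+ N <= e / 2.
  by have := tailN N (leqnn N); rewrite /= sub0r normrN ger0_norm // exprn_ge0 // subr_ge0.
exists (occupation_flow g0 K d N); split.
- exact: occupation_flow_cube.
- move=> k; apply: le_trans (occupation_flow_residual N g0K d_gt0 d_le1 k) _; lra.
- rewrite occupation_flow_cost //; apply: ltW; apply: le_lt_trans lim_lt_c.
  exact: discounted_cost_le_lim.
Qed.

Lemma dOTC_le_of_near_optimal_flows c :
  (forall n, exists rho : Z * Z -> R, [/\ forall w, 0 <= rho w <= 1,
    forall k, `|flow_residual rho k| <= n.+1%:R^-1 & flow_cost rho <= c]) ->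
  dOTC mX nuX mY nuY C <= c.
Proof.
move=> flows; have [rho [cube res0 cost_le]] :=
  compact_common_zero_of_approx (@unit_cube_compact R (Z * Z)%type) flow_residual_continuous
    flow_cost_continuous flows.
by apply: le_trans cost_le; apply: dOTC_le_flow_cost => // w; case/andP: (cube w).
Qed.

Lemma dOTC_sub_le_dWL_inf eta : 0 < eta ->
  exists2 e : R, 0 < e & forall d, 0 < d -> d < e ->
    dOTC mX nuX mY nuY C - eta <= dWL_inf mX nuX mY nuY C d.
Proof.
move=> eta_gt0; apply: contrapT => no_e.
suff : dOTC mX nuX mY nuY C <= dOTC mX nuX mY nuY C - eta by lra.
apply: dOTC_le_of_near_optimal_flows => n; set e : R := n.+1%:R^-1.
have e_gt0 : 0 < e by rewrite invr_gt0.
have e_le1 : e <= 1 by rewrite invf_le1 // ler1n.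
have /existsNP[d /not_implyP[d_gt0 /not_implyP[d_lt /negP]]] :
    ~ (forall d, 0 < d -> d < e / 4 ->
      dOTC mX nuX mY nuY C - eta <= dWL_inf mX nuX mY nuY C d).
  by move=> small; apply: no_e; exists (e / 4); rewrite ?divr_gt0.
rewrite -ltNge => lt_c; apply: exists_near_optimal_flow lt_c => //; lra.
Qed.

Lemma dWL_inf_cvg :
  dWL_inf mX nuX mY nuY C d @[d --> 0^'+] --> dOTC mX nuX mY nuY C.
Proof.
apply/cvgrPdist_le => eta eta_gt0; have [e e_gt0 close] := dOTC_sub_le_dWL_inf eta_gt0.
near=> d.
have d_gt0 : 0 < d by near: d; exact: nbhs_right_gt.
have d_lt1 : d < 1 by near: d; exact: nbhs_right_lt ltr01.
have d_lt_e : d < e by near: d; exact: nbhs_right_lt.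
have le_OTC := dWL_inf_le_dOTC d_gt0 (ltW d_lt1); have := close d d_gt0 d_lt_e.
by rewrite ger0_norm ?subr_ge0 //; lra.
Unshelve. all: by end_near.
Qed.

End StationaryChains.

Theorem theorem16 (R : realType) (X Y : finType)
  (mX : X -> X -> R) (nuX : X -> R) (mY : Y -> Y -> R) (nuY : Y -> R)
  (C : X -> Y -> R) :
  stationary_chain mX nuX -> stationary_chain mY nuY ->
  (forall x y, 0 <= C x y) ->
  ((fun delta : R => dWL_inf mX nuX mY nuY C delta) @ (0 : R)^'+ --> dOTC mX nuX mY nuY C) /\
  ((forall delta : R, 0 < delta <= 1 -> cvgn (fun k : nat => dWL_k mX nuX mY nuY C delta k)) /\
   ((fun delta : R => limn (fun k : nat => dWL_k mX nuX mY nuY C delta k)) @ (0 : R)^'+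
      --> dOTC mX nuX mY nuY C)).
Proof.
move=> HX HY C_ge0; have WL_cvg := dWL_inf_cvg HX HY C_ge0.
split; first exact: WL_cvg.
split => [d /andP[d_gt0 d_le1]|]; first exact: cvgP (dWL_k_cvg HX HY C_ge0 d_gt0 d_le1).
apply: cvg_trans WL_cvg; apply: near_eq_cvg; near=> d.
have d_gt0 : 0 < d by near: d; exact: nbhs_right_gt.
have d_lt1 : d < 1 by near: d; exact: nbhs_right_lt ltr01.
by rewrite (cvg_lim _ (dWL_k_cvg HX HY C_ge0 d_gt0 (ltW d_lt1))).
Unshelve. all: by end_near.
Qed.
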